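(* If $(X_A,\sigma_A)$ and $(X_B,\sigma_B)$ are one-sided flow equivalent, then they are continuously orbit equivalent.
   Context: Let $N,M>1$ and let $A$ ($N\times N$), $B$ ($M\times M$) be irreducible $\{0,1\}$-matrices which are not permutation matrices. $X_A$ is the compact space of sequences $(x_n)_{n\in\mathbb N}$ with $x_n\in\{1,\dots,N\}$, $A(x_n,x_{n+1})=1$, and $\sigma_A((x_n)_n)=(x_{n+1})_n$; similarly $(X_B,\sigma_B)$. $\mathbb Z_+$, $\mathbb R_+$ denote nonnegative integers/reals. $H^A$ is the quotient of $C(X_A,\mathbb Z)$ by $\{u-u\circ\sigma_A\}$, $H^A_+$ the classes of $\mathbb Z_+$-valued continuous functions; $[f]\in H^A_+$ is an order unit if for every $[u]\in H^A$ some $n\in\mathbb N$ has $n[f]-[u]\in H^A_+$. A suspension triplet for $(X_A,\sigma_A)$ is $(l,k,b)$ with $l,k\in C(X_A,\mathbb R_+)$, $b\in C(X_A,\mathbb R)$, $c=l-k$ integer-valued with $[c]$ an order unit, and $l-b$, $k-b\circ\sigma_A$ $\mathbb Z_+$-valued. $S^{l,k}_{A,b}$ is the quotient of $\{(x,r)\in X_A\times\mathbb R: r\ge b(x)\}$ by the equivalence relation generated by $(x,r)\sim(\sigma_A(x),r-c(x))$ for $r\ge l(x)$, with classes $[x,r]$ and flow $\phi_{A,t}([x,r])=[x,r+t]$ ($t\in\mathbb R_+$); $S^1_A:=S^{1,0}_{A,0}$ and $s_A(x)=[x,0]$. One-sided flow equivalence: there are suspension triplets $(l_1,k_1,b_1)$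 for $A$ and $(l_2,k_2,b_2)$ for $B$, a homeomorphism $h:X_A\to X_B$ and continuous $\Phi_1:S^{l_1,k_1}_{A,b_1}\to S^1_B$, $\Phi_2:S^{l_2,k_2}_{B,b_2}\to S^1_A$ with $\Phi_1\circ\phi_{A,t}=\phi_{B,t}\circ\Phi_1$, $\Phi_2\circ\phi_{B,t}=\phi_{A,t}\circ\Phi_2$ for all $t\in\mathbb R_+$, $\Phi_1([x,b_1(x)])=s_B(h(x))$ and $\Phi_2([y,b_2(y)])=s_A(h^{-1}(y))$. Continuous orbit equivalence: there are a homeomorphism $h:X_A\to X_B$ and continuous $k_1,l_1:X_A\to\mathbb Z_+$, $k_2,l_2:X_B\to\mathbb Z_+$ with $\sigma_B^{k_1(x)}(h(\sigma_A(x)))=\sigma_B^{l_1(x)}(h(x))$ for all $x\in X_A$ and $\sigma_A^{k_2(y)}(h^{-1}(\sigma_B(y)))=\sigma_A^{l_2(y)}(h^{-1}(y))$ for all $y\in X_B$. *)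

From Stdlib Require Import Reals Relations ZArith.
From mathcomp Require Import all_boot all_order all_algebra all_fingroup.

Set Implicit Arguments.
Unset Strict Implicit.
Unset Printing Implicit Defensive.

Section Matrices.
Local Open Scope ring_scope.
Import GRing.Theory Num.Theory.

Definition zero_one_mx (N : nat) (A : 'M[int]_N) : Prop :=
  forall i j, A i j = 0 \/ A i j = 1.

Definition irreducible_mx (N : nat) (A : 'M[int]_N) : Prop :=
  forall i j : 'I_N, exists n : nat, (0 < n)%N /\ 0 < (A ^+ n) i j.

Definition is_permutation_mx (N : nat) (A : 'M[int]_N) : Prop :=
  exists s : 'S_N, A = perm_mx s.

Definition seqs (N : nat) : Type := nat -> 'I_N.

Definition XA (N : nat) (A : 'M[int]_N) (x : seqs N) : Prop :=
  forall n : nat, A (x n) (x n.+1) = 1.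
End Matrices.

Open Scope R_scope.

Definition shift (N : nat) (x : seqs N) : seqs N := fun n => x n.+1.

Definition agree (N : nat) (n : nat) (x y : seqs N) : Prop :=
  forall i : nat, (i < n)%N -> x i = y i.

(* Continuity w.r.t. the product topology of discrete 'I_N on nat -> 'I_N,
   restricted (subspace topology) to a subset X. *)
Definition cont_real (N : nat) (X : seqs N -> Prop) (f : seqs N -> R) : Prop :=
  forall x, X x -> forall eps, 0 < eps ->
    exists n, forall y, X y -> agree n x y -> Rabs (f y - f x) < eps.

Definition cont_int (N : nat) (X : seqs N -> Prop) (f : seqs N -> Z) : Prop :=
  forall x, X x -> exists n, forall y, X y -> agree n x y -> f y = f x.

Definition cont_nat (N : nat) (X : seqs N -> Prop) (f : seqs N -> nat) : Prop :=
  forall x, X x -> exists n, forall y, X y -> agree n x y -> f y = f x.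

Definition cont_map (N M : nat) (X : seqs N -> Prop) (f : seqs N -> seqs M) : Prop :=
  forall x, X x -> forall m, exists n, forall y, X y -> agree n x y -> agree m (f x) (f y).

Definition homeo (N M : nat) (X : seqs N -> Prop) (Y : seqs M -> Prop)
    (h : seqs N -> seqs M) (hinv : seqs M -> seqs N) : Prop :=
  (forall x, X x -> Y (h x)) /\ (forall y, Y y -> X (hinv y)) /\
  (forall x, X x -> hinv (h x) = x) /\ (forall y, Y y -> h (hinv y) = y) /\
  cont_map X h /\ cont_map Y hinv.

(* [c] is an order unit of (H^A, H^A_+), where
   H^A = C(X_A,Z) / {u - u o sigma_A}:  for every [u] in H^A there is n with
   n[c] - [u] in H^A_+, i.e. n c - u = g + v - v o sigma_A with g continuous
   Z_+-valued and v continuous Z-valued. *)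
Definition order_unit (N : nat) (A : 'M[int]_N) (c : seqs N -> Z) : Prop :=
  forall u : seqs N -> Z, cont_int (XA A) u ->
    exists n : nat, exists g v : seqs N -> Z,
      cont_int (XA A) g /\ cont_int (XA A) v /\
      (forall x, XA A x -> Z.le 0 (g x)) /\
      (forall x, XA A x ->
         Z.sub (Z.mul (Z.of_nat n) (c x)) (u x) = Z.sub (Z.add (g x) (v x)) (v (shift x))).

Definition susp_triplet (N : nat) (A : 'M[int]_N) (l k b : seqs N -> R) : Prop :=
  cont_real (XA A) l /\ cont_real (XA A) k /\ cont_real (XA A) b /\
  (forall x, XA A x -> 0 <= l x /\ 0 <= k x) /\
  (exists c : seqs N -> Z,
     cont_int (XA A) c /\ (forall x, XA A x -> l x - k x = IZR (c x)) /\
     order_unit A c) /\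
  (forall x, XA A x -> exists m : nat, l x - b x = INR m) /\
  (forall x, XA A x -> exists m : nat, k x - b (shift x) = INR m).

Definition pt (N : nat) : Type := (seqs N * R)%type.

Definition susp_dom (N : nat) (A : 'M[int]_N) (b : seqs N -> R) (p : pt N) : Prop :=
  XA A p.1 /\ b p.1 <= p.2.

Definition susp_step (N : nat) (A : 'M[int]_N) (l k b : seqs N -> R) (p q : pt N) : Prop :=
  susp_dom A b p /\ l p.1 <= p.2 /\ q = (shift p.1, p.2 - (l p.1 - k p.1)).

(* The equivalence relation generated; S^{l,k}_{A,b} is the quotient of
   susp_dom A b by it. *)
Definition susp_eqv (N : nat) (A : 'M[int]_N) (l k b : seqs N -> R) : relation (pt N) :=
  clos_refl_sym_trans (pt N) (susp_step A l k b).

(* Data for S^1_A = S^{1,0}_{A,0}. *)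
Definition one_f (N : nat) : seqs N -> R := fun _ => 1.
Definition zero_f (N : nat) : seqs N -> R := fun _ => 0.

(* Relatively open subsets of D (D a subset of X_A x R with the product
   topology, basic opens: cylinder x open interval). *)
Definition rel_open (N : nat) (D : pt N -> Prop) (U : pt N -> Prop) : Prop :=
  forall p, D p -> U p -> exists n : nat, exists eps : R, 0 < eps /\
    forall q, D q -> agree n p.1 q.1 -> Rabs (q.2 - p.2) < eps -> U q.

Definition saturated (N : nat) (D : pt N -> Prop) (E : relation (pt N))
    (V : pt N -> Prop) : Prop :=
  forall p q, D p -> D q -> E p q -> V p -> V q.

(* A map Phi : S^{l,k}_{A,b} -> S^1_B, given by a lift Phi' on representatives:
   it sends the domain into the domain, respects the equivalence relations
   (so it induces a map on the quotients), is continuous for the quotient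
   topologies (preimage of a quotient-open set is quotient-open; quotient-open
   sets of S^1_B correspond to saturated relatively open subsets of the
   domain), and intertwines the flows phi_{A,t}, phi_{B,t} (t >= 0). *)
Definition susp_map (N M : nat) (A : 'M[int]_N) (l k b : seqs N -> R)
    (B : 'M[int]_M) (Phi : pt N -> pt M) : Prop :=
  (forall p, susp_dom A b p -> susp_dom B (@zero_f M) (Phi p)) /\
  (forall p q, susp_dom A b p -> susp_dom A b q -> susp_eqv A l k b p q ->
     susp_eqv B (@one_f M) (@zero_f M) (@zero_f M) (Phi p) (Phi q)) /\
  (forall V : pt M -> Prop,
     saturated (susp_dom B (@zero_f M)) (susp_eqv B (@one_f M) (@zero_f M) (@zero_f M)) V ->
     rel_open (susp_dom B (@zero_f M)) V ->
     rel_open (susp_dom A b) (fun p => V (Phi p))) /\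
  (forall p t, susp_dom A b p -> 0 <= t ->
     susp_eqv B (@one_f M) (@zero_f M) (@zero_f M)
       (Phi (p.1, p.2 + t)) ((Phi p).1, (Phi p).2 + t)).

Definition one_sided_flow_equiv (N M : nat) (A : 'M[int]_N) (B : 'M[int]_M) : Prop :=
  exists (l1 k1 b1 : seqs N -> R) (l2 k2 b2 : seqs M -> R)
         (h : seqs N -> seqs M) (hinv : seqs M -> seqs N)
         (Phi1 : pt N -> pt M) (Phi2 : pt M -> pt N),
    susp_triplet A l1 k1 b1 /\ susp_triplet B l2 k2 b2 /\
    homeo (XA A) (XA B) h hinv /\
    susp_map A l1 k1 b1 B Phi1 /\ susp_map B l2 k2 b2 A Phi2 /\
    (forall x, XA A x ->
       susp_eqv B (@one_f M) (@zero_f M) (@zero_f M) (Phi1 (x, b1 x)) (h x, 0)) /\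
    (forall y, XA B y ->
       susp_eqv A (@one_f N) (@zero_f N) (@zero_f N) (Phi2 (y, b2 y)) (hinv y, 0)).

Definition cont_orbit_equiv (N M : nat) (A : 'M[int]_N) (B : 'M[int]_M) : Prop :=
  exists (h : seqs N -> seqs M) (hinv : seqs M -> seqs N)
         (k1 l1 : seqs N -> nat) (k2 l2 : seqs M -> nat),
    homeo (XA A) (XA B) h hinv /\
    cont_nat (XA A) k1 /\ cont_nat (XA A) l1 /\
    cont_nat (XA B) k2 /\ cont_nat (XA B) l2 /\
    (forall x, XA A x ->
       iter (k1 x) (@shift M) (h (shift x)) = iter (l1 x) (@shift M) (h x)) /\
    (forall y, XA B y ->
       iter (k2 y) (@shift N) (hinv (shift y)) = iter (l2 y) (@shift N) (hinv y)).

From Stdlib Require Import Reals Relations Lra ClassicalEpsilon.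
From mathcomp Require Import all_boot all_order all_algebra all_fingroup.

(* In the unit suspension S^1_B every class [y, r] has a unique normal form
   (sigma_B^n y, r - n) with 0 <= r - n < 1, so [y, m] = [y', m'] for naturals
   m, m' forces sigma_B^m y = sigma_B^m' y'.  Given a flow map Phi sending
   [x, b(x)] to [h x, 0], the integer-valued continuous functions l - b and
   k - b o sigma_A give
     [h x, l x - b x] = Phi [x, l x] = Phi [sigma_A x, k x]
                      = [h (sigma_A x), k x - b (sigma_A x)],
   which is the orbit equation of a continuous orbit equivalence. *)

Set Implicit Arguments.
Unset Strict Implicit.
Local Open Scope R_scope.

Local Arguments rst_step {A R x y}.
Local Arguments rst_sym {A R x y}.
Local Arguments rst_trans {A R x y z}.

Lemma INR_close_eq (a b : nat) : Rabs (INR a - INR b) < 1 -> a = b.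
Proof.
move=> close; case: (ltngtP a b) => // [lt_ab | lt_ba]; exfalso.
- have := le_INR _ _ (leP lt_ab); rewrite S_INR.
  by move: close; rewrite /Rabs; case: Rcase_abs; lra.
- have := le_INR _ _ (leP lt_ba); rewrite S_INR.
  by move: close; rewrite /Rabs; case: Rcase_abs; lra.
Qed.

Section Continuity.
Variable N : nat.
Implicit Types (X : seqs N -> Prop) (f g : seqs N -> R).

Lemma agree_leq n m (x y : seqs N) : (n <= m)%N -> agree m x y -> agree n x y.
Proof. by move=> le_nm xy i lt_in; apply: xy; apply: leq_trans le_nm. Qed.

Lemma agree_shift n (x y : seqs N) : agree n.+1 x y -> agree n (shift x) (shift y).
Proof. by move=> xy i lt_in; apply: xy. Qed.

Lemma cont_real_sub X f g :
  cont_real X f -> cont_real X g -> cont_real X (fun x => f x - g x).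
Proof.
move=> cf cg x Xx eps eps_gt0.
have [n1 Hf] := cf x Xx (eps / 2) ltac:(lra).
have [n2 Hg] := cg x Xx (eps / 2) ltac:(lra).
exists (maxn n1 n2) => y Yy xy.
have := Hf y Yy (agree_leq (leq_maxl n1 n2) xy).
have := Hg y Yy (agree_leq (leq_maxr n1 n2) xy).
rewrite /Rabs; do 3 case: Rcase_abs; lra.
Qed.

Lemma cont_real_comp_shift (A : 'M[int]_N) f :
  cont_real (XA A) f -> cont_real (XA A) (fun x => f (shift x)).
Proof.
move=> cf x Xx eps eps_gt0.
have [n Hf] := cf (shift x) (fun i => Xx i.+1) eps eps_gt0.
by exists n.+1 => y Yy xy; apply: Hf (fun i => Yy i.+1) (agree_shift xy).
Qed.

Lemma cont_nat_of_INR X f (g : seqs N -> nat) :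
  cont_real X f -> (forall x, X x -> f x = INR (g x)) -> cont_nat X g.
Proof.
move=> cf fg x Xx; have [n Hf] := cf x Xx 1 ltac:(lra).
by exists n => y Yy xy; apply: INR_close_eq; rewrite -!fg //; apply: Hf.
Qed.

End Continuity.

Lemma nat_valued_lift (T : Type) (X : T -> Prop) (f : T -> R) :
  (forall x, X x -> exists m : nat, f x = INR m) ->
  exists g : T -> nat, forall x, X x -> f x = INR (g x).
Proof.
move=> fnat; exists (fun x => epsilon (inhabits 0%N) (fun m => f x = INR m)).
by move=> x Xx; apply: epsilon_spec (fnat x Xx).
Qed.

Lemma susp_eqv_flow (N : nat) (A : 'M[int]_N) (l k b : seqs N -> R) (p q : pt N) t :
  0 <= t -> susp_eqv A l k b p q ->
  susp_eqv A l k b (p.1, p.2 + t) (q.1, q.2 + t).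
Proof.
move=> t_ge0; elim=> {p q} [p q [[Xp bp] [lp ->]] | p | p q _ IH | p q r _ IHpq _ IHqr].
- apply: rst_step; split; [split=> /= //; lra | split=> /=; [lra | congr pair; ring]].
- exact: rst_refl.
- exact: rst_sym.
- exact: rst_trans IHqr.
Qed.

Notation unit_susp_eqv B := (susp_eqv B (@one_f _) (@zero_f _) (@zero_f _)).

Section UnitSuspension.
Variables (M : nat) (B : 'M[int]_M).

Definition unit_normal_form (p : pt M) (z : seqs M) (r : R) : Prop :=
  exists n : nat, z = iter n (@shift M) p.1 /\ r = p.2 - INR n /\ 0 <= r < 1.

Lemma unit_normal_form_eqv p q :
  unit_susp_eqv B p q -> forall z r, unit_normal_form p z r <-> unit_normal_form q z r.
Proof.
elim=> {p q} [p q [_ [lp ->]] | p | p q _ IH | p q r _ IHpq _ IHqr] z s.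
- rewrite /one_f /zero_f /= in lp *; split.
  + move=> [[|n] [-> [-> s01]]]; first by move: s01 => /=; lra.
    by exists n; rewrite S_INR in s01; rewrite S_INR -iterSr /=; split=> //; split; lra.
  + move=> [n [-> [-> /= s01]]].
    by exists n.+1; rewrite S_INR iterSr /=; split=> //; split; lra.
- by [].
- by rewrite IH.
- by rewrite IHpq IHqr.
Qed.

Lemma unit_eqv_nat_iter (y y' : seqs M) (m m' : nat) :
  unit_susp_eqv B (y, INR m) (y', INR m') -> iter m (@shift M) y = iter m' (@shift M) y'.
Proof.
move=> eqv.
have nf : unit_normal_form (y, INR m) (iter m (@shift M) y) 0.
  by exists m; split=> //=; split; lra.
have [n [-> [/= n_m' _]]] := (unit_normal_form_eqv eqv _ _).1 nf.
by have -> : n = m' by apply: INR_eq; lra.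
Qed.

End UnitSuspension.

Section FlowMapToUnitSuspension.
Variables (N M : nat) (A : 'M[int]_N) (B : 'M[int]_M).
Variables (l k b : seqs N -> R) (Phi : pt N -> pt M) (h : seqs N -> seqs M).
Hypothesis Phi_map : susp_map A l k b B Phi.
Hypothesis Phi_base : forall x, XA A x -> unit_susp_eqv B (Phi (x, b x)) (h x, 0).

Lemma susp_map_base_flow x (m : nat) :
  XA A x -> unit_susp_eqv B (Phi (x, b x + INR m)) (h x, INR m).
Proof.
case: Phi_map => _ [_ [_ Phi_flow]] Xx.
have m_ge0 := pos_INR m.
apply: rst_trans (Phi_flow (x, b x) _ _ m_ge0) _; first by split=> //=; lra.
by have := susp_eqv_flow m_ge0 (Phi_base Xx); rewrite /= Rplus_0_l.
Qed.

Lemma susp_map_orbit_eq x (m n : nat) :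
  XA A x -> l x - b x = INR m -> k x - b (shift x) = INR n ->
  iter n (@shift M) (h (shift x)) = iter m (@shift M) (h x).
Proof.
case: Phi_map => _ [Phi_eqv _] Xx lm kn.
have Xsx : XA A (shift x) by move=> i; apply: Xx.
have m_ge0 := pos_INR m; have n_ge0 := pos_INR n.
have step : unit_susp_eqv B (Phi (x, l x)) (Phi (shift x, k x)).
  apply: Phi_eqv; [split=> //=; lra | split=> //=; lra |].
  by apply: rst_step; split; [split=> //=; lra | split=> /=; [lra | congr pair; ring]].
have flow_m : unit_susp_eqv B (Phi (x, l x)) (h x, INR m).
  by rewrite -[l x](Rplus_minus (b x)) lm; apply: susp_map_base_flow.
have flow_n : unit_susp_eqv B (Phi (shift x, k x)) (h (shift x), INR n).
  by rewrite -[k x](Rplus_minus (b (shift x))) kn; apply: susp_map_base_flow.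
apply: (unit_eqv_nat_iter (B := B)).
exact: rst_trans (rst_sym flow_n) (rst_trans (rst_sym step) flow_m).
Qed.

Lemma susp_map_orbit_cocycle :
  susp_triplet A l k b ->
  exists k1 l1 : seqs N -> nat,
    cont_nat (XA A) k1 /\ cont_nat (XA A) l1 /\
    (forall x, XA A x ->
       iter (k1 x) (@shift M) (h (shift x)) = iter (l1 x) (@shift M) (h x)).
Proof.
case=> cl [ck [cb [_ [_ [lb_nat kb_nat]]]]].
have [l1 Hl1] := nat_valued_lift lb_nat.
have [k1 Hk1] := nat_valued_lift kb_nat.
exists k1, l1; split; last split.
- exact: cont_nat_of_INR (cont_real_sub ck (cont_real_comp_shift cb)) Hk1.
- exact: cont_nat_of_INR (cont_real_sub cl cb) Hl1.
- by move=> x Xx; apply: susp_map_orbit_eq (Hl1 x Xx) (Hk1 x Xx).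
Qed.

End FlowMapToUnitSuspension.

Theorem proposition3p3 (N M : nat) (A : 'M[int]_N) (B : 'M[int]_M) :
  (1 < N)%N -> (1 < M)%N ->
  zero_one_mx A -> zero_one_mx B ->
  irreducible_mx A -> irreducible_mx B ->
  ~ is_permutation_mx A -> ~ is_permutation_mx B ->
  one_sided_flow_equiv A B -> cont_orbit_equiv A B.
Proof.
move=> _ _ _ _ _ _ _ _
  [l1 [k1 [b1 [l2 [k2 [b2 [h [hinv [Phi1 [Phi2
    [T1 [T2 [hh [S1 [S2 [base1 base2]]]]]]]]]]]]]]]].
have [kk1 [ll1 [ck1 [cl1 orbit1]]]] := susp_map_orbit_cocycle S1 base1 T1.
have [kk2 [ll2 [ck2 [cl2 orbit2]]]] := susp_map_orbit_cocycle S2 base2 T2.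
exists h, hinv, kk1, ll1, kk2, ll2; tauto.
Qed.
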